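(* Let $X$ be a compact metrizable countable space and $f:X\to X$ a continuous function such that $(X,f)$ is transitive. If $f^p$ is continuous for every $p\in\mathbb N^*$, then the set $P_f$ is finite.
   Context: $(X,f)$ is transitive if some point has dense orbit $\{f^n(x):n\in\mathbb N\}$. $\mathbb N^*$ is the set of free ultrafilters on $\mathbb N$; for $p\in\mathbb N^*$ the $p$-iterate is $f^p(x)=p\text{-}\lim_{n\to\infty}f^n(x)$, where $y=p\text{-}\lim x_n$ means $\{n: x_n\in V\}\in p$ for every neighborhood $V$ of $y$. A point $x$ is periodic if $f^n(x)=x$ for some $n\ge1$, with period $\min\{n\ge1:f^n(x)=x\}$; $P_f$ is the set of all periods of periodic points of $f$. *)

From HB Require Import structures.
From mathcomp Require Import all_boot all_order all_algebra.
From mathcomp Require Import all_classical all_reals all_analysis.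
Set Implicit Arguments. Unset Strict Implicit. Unset Printing Implicit Defensive.
Import Order.TTheory GRing.Theory Num.Theory.
Local Open Scope classical_set_scope.

Definition free_ultrafilter (p : set_system nat) : Prop :=
  UltraFilter p /\ \bigcap_(A in p) A = set0.

Definition plim {T : topologicalType} (p : set_system nat) (u : nat -> T) (y : T) :
  Prop := (u @ p) --> y.

Definition is_p_iterate {T : topologicalType} (f : T -> T) (p : set_system nat)
  (g : T -> T) : Prop := forall x, plim p (fun n => iter n f x) (g x).

Definition transitive_sys {T : topologicalType} (f : T -> T) : Prop :=
  exists x, closure (range (fun n => iter n f x)) = [set: T].

Definition has_period {T : Type} (f : T -> T) (x : T) (n : nat) : Prop :=
  (0 < n)%N /\ iter n f x = x /\ (forall m, (0 < m)%N -> iter m f x = x -> (n <= m)%N).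

Definition periods {T : Type} (f : T -> T) : set nat :=
  [set n | exists x, has_period f x n].

From HB Require Import structures.
From mathcomp Require Import all_boot all_order all_algebra.
From mathcomp Require Import all_classical all_reals all_analysis.
Local Open Scope classical_set_scope.

(* Let y be periodic of period k and x0 a point with dense orbit.  Since
   f^(kN)(y) = y, the point y clusters at every tail of the orbit of x0, so
   some free ultrafilter p makes f^n(x0) converge to y.  The continuous
   p-iterate g then satisfies g(f^n(x0)) = f^n(y), so by density g maps X
   into the finite, hence closed, orbit of y.  But g(z) also lies in the
   closure of the orbit of z, which for periodic z is that orbit.  So every
   periodic orbit meets the orbit of y, and every period is at most k. *)

Definition forward_orbit {T : Type} (f : T -> T) (x : T) : set T :=
  range (fun n => iter n f x).

Lemma continuous_iter {T : topologicalType} {f : T -> T} (n : nat) :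
  continuous f -> continuous (iter n f).
Proof.
move=> cf; elim: n => [|n IH] x /=; first exact: cvg_id.
exact: (continuous_comp (IH x) (cf _)).
Qed.

Lemma iter_periodM {T : Type} {f : T -> T} {x : T} {k : nat} (t : nat) :
  iter k f x = x -> iter (k * t) f x = x.
Proof. by move=> fx; rewrite mulnC iterM iter_fix. Qed.

Lemma finite_forward_orbit {T : Type} {f : T -> T} {x : T} {k : nat} :
  (0 < k)%N -> iter k f x = x -> finite_set (forward_orbit f x).
Proof.
move=> kpos fx.
apply: sub_finite_set (finite_image (fun i => iter i f x) (finite_II k)).
move=> _ [i _ <-]; exists (i %% k); first by rewrite /= ltn_pmod.
by rewrite {2}(divn_eq i k) addnC iterD mulnC iter_periodM.
Qed.

Lemma closed_forward_orbit {T : topologicalType} {f : T -> T} {x : T}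
    {k : nat} :
  accessible_space T -> (0 < k)%N -> iter k f x = x ->
  closed (forward_orbit f x).
Proof.
move=> acc kpos fx.
exact: (accessible_finite_set_closed.1 acc _ (finite_forward_orbit kpos fx)).
Qed.

Lemma orbit_meet_period {T : Type} {f : T -> T} {y z : T} {k n a b : nat} :
  (0 < n)%N -> iter n f z = z -> iter k f y = y ->
  iter a f z = iter b f y -> iter k f z = z.
Proof.
move=> npos fz fy meet.
have zE : z = iter (n * a - a + b) f y.
  rewrite iterD -meet -iterD subnK ?iter_periodM //.
  by rewrite leq_pmull.
by rewrite {1}zE -iterD addnC iterD fy -zE.
Qed.

Lemma dense_image_sub_closed {S T : topologicalType} {g : S -> T}
    {A : set S} {B : set T} :
  continuous g -> closure A = [set: S] -> closed B -> g @` A `<=` B ->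
  range g `<=` B.
Proof.
move=> cg dA cB gAB _ [z _ <-].
have cgB : closed (g @^-1` B) := (continuous_closedP g).1 cg B cB.
have Az : closure A z by rewrite dA.
suff : closure (g @^-1` B) z by rewrite -((closure_id _).1 cgB).
by apply: closureS Az => a Aa; apply: gAB; exists a.
Qed.

Lemma periodic_cluster_orbit_tail {T : topologicalType} {f : T -> T}
    {x y : T} {k : nat} :
  continuous f -> (0 < k)%N -> iter k f y = y ->
  closure (forward_orbit f x) y ->
  forall V N, nbhs y V -> exists2 n, (N <= n)%N & V (iter n f x).
Proof.
move=> cf kpos fy cly V N yV.
have yV' : nbhs y (iter (k * N) f @^-1` V).
  by apply: (continuous_iter (k * N) cf y); rewrite iter_periodM.
have [_ [[m _ <-] Vm]] := cly _ yV'.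
exists (k * N + m)%N; last by rewrite iterD.
exact: leq_trans (leq_pmull N kpos) (leq_addr m _).
Qed.

Lemma free_ultrafilter_plim {T : topologicalType} {u : nat -> T} {y : T} :
  (forall V N, nbhs y V -> exists2 n, (N <= n)%N & V (u n)) ->
  exists2 p, free_ultrafilter p & plim p u y.
Proof.
move=> cluster.
pose D := [set NV : nat * set T | nbhs y NV.2].
pose B (NV : nat * set T) := [set n | (NV.1 <= n)%N /\ NV.2 (u n)].
have FF : Filter (filter_from D B).
  apply: filter_from_filter; first by exists (0%N, setT); exact: filterT.
  move=> [N V] [N' V'] /= yV yV'; exists (maxn N N', V `&` V').
    exact: filterI.
  by move=> n /= [/[!geq_max] /andP[? ?] [? ?]]; split; split.
have PF : ProperFilter (filter_from D B).
  apply: filter_from_proper => -[N V] /= yV.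
  by have [n ? ?] := cluster V N yV; exists n.
have [p [pU sub]] := ultraFilterLemma PF.
exists p; last by move=> V yV; apply: sub; exists (0%N, V) => // n [].
split=> //; apply/seteqP; split => // n pn.
have : p (B (n.+1, setT)).
  by apply: sub; exists (n.+1, setT) => //; exact: filterT.
by move=> /pn [/=]; rewrite ltnn.
Qed.

Section PIterate.
Context {T : topologicalType} {f g : T -> T} {p : set_system nat}.
Context {pF : ProperFilter p}.
Hypothesis pg : is_p_iterate f p g.

Lemma p_iterate_closure_orbit x : closure (forward_orbit f x) (g x).
Proof.
apply: closed_cvg (pg x); first exact: closed_closure.
by apply: nearW => n; apply: subset_closure; exists n.
Qed.

Lemma p_iterate_iter {x y : T} :
  hausdorff_space T -> continuous f ->
  plim p (fun m => iter m f x) y -> forall n, g (iter n f x) = iter n f y.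
Proof.
move=> sep cf xy n; apply: (cvg_unique sep (pg _)).
have -> : (fun m => iter m f (iter n f x)) = iter n f \o (fun m => iter m f x).
  by apply: funext => m /=; rewrite -!iterD addnC.
exact: cvg_comp xy (continuous_iter n cf y).
Qed.

End PIterate.

Lemma periods_le_period {T : topologicalType} {f : T -> T} {y : T} {k : nat} :
  hausdorff_space T -> continuous f -> transitive_sys f ->
  (forall p, free_ultrafilter p ->
     exists g, is_p_iterate f p g /\ continuous g) ->
  (0 < k)%N -> iter k f y = y -> forall n, periods f n -> (n <= k)%N.
Proof.
move=> sep cf [x dense] hp kpos fy.
have acc := hausdorff_accessible sep.
have cly : closure (forward_orbit f x) y by rewrite [closure _]dense.
have [p pfree xy] :=
  free_ultrafilter_plim (periodic_cluster_orbit_tail cf kpos fy cly).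
have [g [pg cg]] := hp p pfree.
case: pfree => pU _.
have gOy : range g `<=` forward_orbit f y.
  apply: dense_image_sub_closed cg dense (closed_forward_orbit acc kpos fy) _.
  by move=> _ [_ [m _ <-] <-]; rewrite (p_iterate_iter pg sep cf xy); exists m.
move=> n [z [npos [fz zmin]]].
have [a _ ga] : forward_orbit f z (g z).
  have cOz := closed_forward_orbit acc npos fz.
  rewrite [forward_orbit f z]((closure_id _).1 cOz).
  exact: p_iterate_closure_orbit pg z.
have [b _ gb] := gOy _ (imageT g z).
exact: zmin kpos (orbit_meet_period npos fz fy (etrans ga (esym gb))).
Qed.

Theorem corollary4p3 (R : realType) (X : metricType R) (f : X -> X) :
  compact [set: X] ->
  countable [set: X] ->
  continuous f ->
  transitive_sys f ->
  (forall p : set_system nat, free_ultrafilter p ->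
     exists g : X -> X, is_p_iterate f p g /\ continuous g) ->
  finite_set (periods f).
Proof.
move=> _ _ cf tr hp.
have [[k [y [kpos [fy _]]]] | noper] := pselect (exists k, periods f k).
  apply: sub_finite_set (finite_II k.+1) => n Pn; rewrite /= ltnS.
  exact: (periods_le_period (@metric_hausdorff R X) cf tr hp kpos fy).
suff -> : periods f = set0 by exact: finite_set0.
by apply/seteqP; split=> // n Pn; apply: noper; exists n.
Qed.
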